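(* Let a control system $S$ and a target system $T$ have ontic state spaces $\Omega_S$ and $\Omega_T$ (each $\mathbb{Z}_d^{2n}$ or $\mathbb{R}^{2n}$ for the respective number of elementary systems, of the same type). Let $V_S^i$ be an isotropic subspace of $\Omega_S$ and $\vec v_{s,1}^i,\dots,\vec v_{s,k}^i\in\Omega_S$ valuations such that the cosets $(V_S^i)^\perp+\vec v_{s,j}^i$, $j=1,\dots,k$, form a partition of $\Omega_S$, so that $(V_S^i,\vec v_{s,j}^i)$ are the possible states of $S$. Let $(V_T^i,\vec v_T^i)$ be the initial valid epistemic state of $T$ and let $S_{ST}$ be a symplectic transformation of $\Omega_S\oplus\Omega_T$. For each $j$, let $(V_T^{f,j},\vec v_T^{f,j})$ denote the marginal on $T$ of the state obtained by applying $S_{ST}$ to the product state $(V_S^i\oplus V_T^i,\ \vec v_{s,j}^i\oplus\vec v_T^i)$. Then for any $j,l$, the marginal target states for $j$ and $l$ are either identical or orthogonal. Moreover, grouping the indices $j$ into classes of identical marginal target states, every class contains the same number of indices.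
   Context: Toy theory (quadrature formalism): ontic states $\vec m\in\Omega$, coordinates $(q_1,p_1,\dots)$; observables $\vec f\in\Omega$ with value $\vec f^T\vec m$; Poisson bracket $[\vec f,\vec g]=\sum_i(f_{2i-1}g_{2i}-f_{2i}g_{2i-1})$. A valid epistemic state $(V,\vec v)$ has $V$ an isotropic subspace/submodule ($[\vec f,\vec g]=0$ for $\vec f,\vec g\in V$); its compatible ontic states are $V^\perp+\vec v$ with $V^\perp=\{\vec m:\vec f^T\vec m=0\ \forall\vec f\in V\}$, uniformly distributed. A symplectic matrix (preserving the Poisson bracket) $\Sigma$ acts by $(V,\vec v)\mapsto((\Sigma^T)^{-1}V,\Sigma\vec v)$. The marginal on $T$ of a joint state is the projection of the set of compatible ontic states (and of the uniform distribution) onto $\Omega_T$. Two epistemic states are orthogonal if their sets of compatible ontic states are disjoint. Physically, this describes an agent preparing $T$ conditionally on the outcome $j$ of a measurement of $S$. *)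

From HB Require Import structures.
From mathcomp Require Import all_boot all_order all_algebra.
From mathcomp Require Import boolp classical_sets.
Set Implicit Arguments. Unset Strict Implicit. Unset Printing Implicit Defensive.
Import GRing.Theory.
Local Open Scope ring_scope.
Local Open Scope classical_set_scope.

(* Ontic states / observables of an m-dimensional phase space are column
   vectors 'cV[K]_m, coordinates ordered (q_1,p_1,q_2,p_2,...), i.e. with
   0-based indices: q at even positions, p at odd positions. *)

(* Symplectic form: [f,g] = f^T J g with J = diag of blocks [[0,1],[-1,0]]. *)
Definition Jmx (K : comNzRingType) (m : nat) : 'M[K]_m :=
  \matrix_(i, j) (if odd j && (i.+1 == j :> nat) then 1
                  else if odd i && (j.+1 == i :> nat) then -1 else 0).

Definition pbracket (K : comNzRingType) (m : nat) (f g : 'cV[K]_m) : K :=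
  (f^T *m Jmx K m *m g) 0 0.

Definition oval (K : comNzRingType) (m : nat) (f x : 'cV[K]_m) : K :=
  (f^T *m x) 0 0.

Definition isotropic (K : comNzRingType) (m : nat) (V : set 'cV[K]_m) : Prop :=
  [/\ V 0,
      (forall f g, V f -> V g -> V (f + g)),
      (forall (a : K) f, V f -> V (a *: f)) &
      (forall f g, V f -> V g -> pbracket f g = 0)].

Record estate (K : comNzRingType) (m : nat) :=
  EState { esp : set 'cV[K]_m ; evl : 'cV[K]_m }.

Definition valid (K : comNzRingType) (m : nat) (s : estate K m) : Prop :=
  isotropic (esp s).

Definition perp (K : comNzRingType) (m : nat) (V : set 'cV[K]_m) : set 'cV[K]_m :=
  [set x | forall f, V f -> oval f x = 0].

Definition ontic (K : comNzRingType) (m : nat) (s : estate K m) : set 'cV[K]_m :=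
  [set x | perp (esp s) (x - evl s)].

Definition symplectic (K : comNzRingType) (m : nat) (Sg : 'M[K]_m) : Prop :=
  forall f g, pbracket (Sg *m f) (Sg *m g) = pbracket f g.

(* action (V,v) |-> ((Sg^T)^{-1} V, Sg v); (Sg^T)^{-1} V = {f | Sg^T f \in V} *)
Definition act (K : comNzRingType) (m : nat) (Sg : 'M[K]_m) (s : estate K m)
  : estate K m :=
  EState [set f | esp s (Sg^T *m f)] (Sg *m evl s).

Definition prod_state (K : comNzRingType) (mS mT : nat)
  (s : estate K mS) (t : estate K mT) : estate K (mS + mT) :=
  EState [set h | exists f g, [/\ h = col_mx f g, esp s f & esp t g]]
         (col_mx (evl s) (evl t)).

Definition marginalT (K : comNzRingType) (mS mT : nat) (s : estate K (mS + mT))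
  : set 'cV[K]_mT :=
  [set y | exists x, ontic s (col_mx x y)].

From HB Require Import structures.
From mathcomp Require Import all_boot all_order all_algebra.
From mathcomp Require Import boolp classical_sets.
Local Open Scope ring_scope.
Local Open Scope classical_set_scope.
Import GRing.Theory.
Set Implicit Arguments. Unset Strict Implicit. Unset Printing Implicit Defensive.

(* The compatible ontic states of the transformed product state form a coset
   P + z_j of an additive subgroup P that does not depend on j, so the
   marginals M_j are cosets of the projection H of P onto Omega_T: any two are
   equal or disjoint.  Moreover M_j = M_l iff v_j - v_l lies in the subgroup
   G = L^-1(H), L d = (Sg (d (+) 0))_T, and G contains (V_S)^perp.  The
   translation x |-> x - v_j + v_l permutes the cosets of (V_S)^perp, i.e. the
   indices, and maps the class of j onto the class of l. *)

Definition zmod_closed_set (V : zmodType) (H : set V) : Prop :=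
  H 0 /\ forall x y, H x -> H y -> H (x - y).

Definition coset (V : zmodType) (H : set V) (z : V) : set V :=
  [set x | H (x - z)].

Section Cosets.
Variables (V : zmodType) (H : set V).
Hypothesis Hzmod : zmod_closed_set H.

Lemma zmod_closed_subr w x : H w -> H (x - w) <-> H x.
Proof.
case: Hzmod => H0 HsubB Hw; split=> [Hxw|Hx]; last exact: HsubB.
have Hopp : H (- w) by rewrite -sub0r; apply: HsubB.
have -> : x = (x - w) - (- w) by rewrite opprK subrK.
exact: HsubB Hxw Hopp.
Qed.

Lemma coset_eqP z1 z2 : coset H z1 = coset H z2 <-> H (z1 - z2).
Proof.
have [H0 HsubB] := Hzmod.
have shift x : x - z1 = (x - z2) - (z1 - z2) by rewrite opprB addrA subrK.
split=> [eq_z | Hz].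
  have : coset H z1 z1 by rewrite /coset /= subrr.
  by rewrite eq_z.
apply/seteqP; split=> x; rewrite /coset /= shift.
  by rewrite zmod_closed_subr.
by move=> Hx; apply: HsubB.
Qed.

Lemma coset_eq_or_disjoint z1 z2 :
  coset H z1 = coset H z2 \/ coset H z1 `&` coset H z2 = set0.
Proof.
have [[x [x1 x2]] | nx] := pselect (exists x, (coset H z1 `&` coset H z2) x).
  left; apply/coset_eqP; have [_ HsubB] := Hzmod.
  have -> : z1 - z2 = (x - z2) - (x - z1) by rewrite opprB [RHS]addrC subrKA.
  exact: HsubB x2 x1.
by right; apply/seteqP; split=> // x x12; apply: nx; exists x.
Qed.

End Cosets.

Section AdditiveMaps.
Variables (U V : zmodType) (f : U -> V).
Hypothesis fB : {morph f : x y / x - y}.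

Lemma image_coset (H : set U) z : f @` coset H z = coset (f @` H) (f z).
Proof.
apply/seteqP; split=> y.
  by case=> x Hxz <-; exists (x - z); rewrite ?fB.
case=> h Hh fh; exists (h + z); rewrite /coset /= ?addrK //.
by apply: (addIr (- f z)); rewrite -fB addrK.
Qed.

Lemma image_zmod_closed (H : set U) :
  zmod_closed_set H -> zmod_closed_set (f @` H).
Proof.
case=> H0 HsubB; split; first by exists 0 => //; rewrite -(subrr 0) fB subrr.
by move=> _ _ [x Hx <-] [y Hy <-]; exists (x - y); rewrite ?fB //; apply: HsubB.
Qed.

Lemma preimage_zmod_closed (H : set V) :
  zmod_closed_set H -> zmod_closed_set (f @^-1` H).
Proof.
case=> H0 HsubB; split; first by rewrite /preimage /= -(subrr 0) fB subrr.
by move=> x y Hx Hy; rewrite /preimage /= fB; apply: HsubB.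
Qed.

End AdditiveMaps.

Section OnticStates.
Variable K : comNzRingType.

Lemma ovalB m (f x y : 'cV[K]_m) : oval f (x - y) = oval f x - oval f y.
Proof. by rewrite /oval mulmxBr !mxE. Qed.

Lemma oval_mulmx m (A : 'M[K]_m) (f x : 'cV[K]_m) :
  oval f (A *m x) = oval (A^T *m f) x.
Proof. by rewrite /oval trmx_mul trmxK mulmxA. Qed.

Lemma oval_col_mx m1 m2 (f x : 'cV[K]_m1) (g y : 'cV[K]_m2) :
  oval (col_mx f g) (col_mx x y) = oval f x + oval g y.
Proof. by rewrite /oval tr_col_mx mul_row_col mxE. Qed.

Lemma perp_zmod_closed m (V : set 'cV[K]_m) : zmod_closed_set (perp V).
Proof.
split; first by move=> f _; rewrite /oval mulmx0 mxE.
by move=> x y Px Py f Vf; rewrite ovalB Px ?Py ?subr0.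
Qed.

Lemma ontic_coset m (s : estate K m) : ontic s = coset (perp (esp s)) (evl s).
Proof. by []. Qed.

Lemma perp_act m (Sg : 'M[K]_m) (s : estate K m) x :
  perp (esp s) x -> perp (esp (act Sg s)) (Sg *m x).
Proof. by move=> Px f Vf; rewrite oval_mulmx; apply: Px. Qed.

Lemma perp_prod_state mS mT (s : estate K mS) (t : estate K mT) x y :
  perp (esp s) x -> perp (esp t) y -> perp (esp (prod_state s t)) (col_mx x y).
Proof.
by move=> Px Py _ [f [g [-> Vf Vg]]]; rewrite oval_col_mx Px ?Py ?addr0.
Qed.

Lemma marginalT_image mS mT (s : estate K (mS + mT)) :
  marginalT s = dsubmx @` ontic s.
Proof.
apply/seteqP; split=> y.
  by case=> x sxy; exists (col_mx x y); rewrite ?col_mxKd.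
by case=> z sz <-; exists (usubmx z); rewrite vsubmxK.
Qed.

End OnticStates.

Section TransversalClasses.
Variables (V : zmodType) (W G : set V) (k : nat) (v : 'I_k -> V).
Hypotheses (Wzmod : zmod_closed_set W) (Gzmod : zmod_closed_set G).
Hypothesis WG : W `<=` G.
Hypothesis v_cover : forall x, exists j, coset W (v j) x.
Hypothesis v_disjoint :
  forall j l, j != l -> coset W (v j) `&` coset W (v l) = set0.

Lemma transversal_index_uniq x j l :
  coset W (v j) x -> coset W (v l) x -> j = l.
Proof.
move=> xj xl; case: (eqVneq j l) => // /v_disjoint/seteqP[sub _].
by case: (sub x).
Qed.

Lemma card_class_translate j l :
  #|[pred i | `[< G (v i - v j) >] ]| = #|[pred i | `[< G (v i - v l) >] ]|.
Proof.
have [idx idxP] := choice v_cover.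
pose phi i := idx (v i - v j + v l).
have phiP i : W (v i - v j + v l - v (phi i)) := idxP _.
have phi_inj : injective phi.
  move=> a b eq_ab; apply: (@transversal_index_uniq (v a)).
    by rewrite /coset /= subrr; case: Wzmod.
  have [_ WsubB] := Wzmod; have := WsubB _ _ (phiP a) (phiP b).
  by rewrite eq_ab opprB subrKA opprD addrACA subrr addr0 opprB subrKA.
have phi_class i : G (v i - v j) <-> G (v (phi i) - v l).
  rewrite -(zmod_closed_subr Gzmod _ (WG (phiP i))).
  by rewrite opprB addrCA opprD addNKr.
transitivity #|[pred i | `[< G (v (phi i) - v l) >] ]|.
  by apply: eq_card => i; rewrite !inE (propext (phi_class i)).
rewrite -[RHS]cardsE -(card_preimset _ phi_inj).
by apply: eq_card => i; rewrite !inE.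
Qed.

End TransversalClasses.

Theorem theorem6 (K : comNzRingType) (nS nT k : nat)
  (VS : set 'cV[K]_(nS.*2)) (vs : 'I_k -> 'cV[K]_(nS.*2))
  (VT : set 'cV[K]_(nT.*2)) (vT : 'cV[K]_(nT.*2))
  (Sg : 'M[K]_(nS.*2 + nT.*2)) :
  isotropic VS ->
  (forall x, exists j, ontic (EState VS (vs j)) x) ->
  (forall j l, j != l -> ontic (EState VS (vs j)) `&` ontic (EState VS (vs l)) = set0) ->
  valid (EState VT vT) ->
  symplectic Sg ->
  let M := fun j : 'I_k =>
    marginalT (act Sg (prod_state (EState VS (vs j)) (EState VT vT))) in
  (forall j l, M j = M l \/ M j `&` M l = set0) /\
  (forall j l, #|[pred j' : 'I_k | `[< M j' = M j >] ]|
             = #|[pred l' : 'I_k | `[< M l' = M l >] ]|).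
Proof.
move=> _ cover disj _ _ M.
(* the support [esp] ignores the valuation, so [EState VS 0] serves for all j *)
set P := perp (esp (act Sg (prod_state (EState VS 0) (EState VT vT)))).
pose L d := dsubmx (Sg *m col_mx d (0 : 'cV[K]_(nT.*2))).
set H := dsubmx @` P.
have Hzmod : zmod_closed_set H := image_zmod_closed (raddfB _) (perp_zmod_closed _).
have LB : {morph L : x y / x - y}.
  by move=> x y; rewrite /L -raddfB -mulmxBr opp_col_mx add_col_mx subr0.
have M_coset j : M j = coset H (dsubmx (Sg *m col_mx (vs j) vT)).
  by rewrite /M marginalT_image ontic_coset image_coset //; apply: raddfB.
have M_eqP j l : M j = M l <-> (L @^-1` H) (vs j - vs l).
  rewrite !M_coset coset_eqP // /preimage /= /L -raddfB -mulmxBr.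
  by rewrite opp_col_mx add_col_mx subrr.
have perp_sub : perp VS `<=` L @^-1` H.
  move=> w VSw; exists (Sg *m col_mx w 0) => //.
  by apply/perp_act/perp_prod_state => //; apply: (perp_zmod_closed VT).1.
split=> j l; first by rewrite !M_coset; apply: coset_eq_or_disjoint.
have class_eq j' : [pred i | `[< M i = M j' >] ]
                   =i [pred i | `[< (L @^-1` H) (vs i - vs j') >] ].
  by move=> i; rewrite !inE; apply/asbool_equiv_eq/M_eqP.
rewrite !(eq_card (class_eq _)).
have Gzmod := preimage_zmod_closed LB Hzmod.
exact: (card_class_translate (perp_zmod_closed VS) Gzmod perp_sub cover disj).
Qed.
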